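(* Let $q$ be a prime power and let $t$ be a positive integer with $t\mid q-1$. Let $\mathbb{F}=\mathrm{GF}(q^2)$ and let $H\subseteq\mathbb{F}^\ast$ be the subgroup of the multiplicative group of order $t(q+1)$. Let $G(q^2,t(q+1))$ be the graph whose vertex set is $(\mathbb{F}\times\mathbb{F}\setminus\{(0,0)\})/\sim$, where $(a_1,b_1)\sim(a_2,b_2)$ iff there is $h\in H$ with $a_1=ha_2$ and $b_1=hb_2$, and in which two distinct vertices $\langle a,b\rangle$ and $\langle x,y\rangle$ are adjacent iff $ax+by\in H$. Then $G(q^2,t(q+1))$ is $K_{3,2t^2+1}$-free.
   Context: $\langle a,b\rangle$ denotes the equivalence class of $(a,b)$; adjacency is independent of representatives; the graph is simple (no loops). A graph is $K_{s,u}$-free if it contains no (not necessarily induced) subgraph isomorphic to the complete bipartite graph $K_{s,u}$. *)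

From mathcomp Require Import all_boot all_algebra all_fingroup.
Set Implicit Arguments. Unset Strict Implicit. Unset Printing Implicit Defensive.
Import GRing.Theory.
Local Open Scope ring_scope.

Definition prime_power (q : nat) : Prop :=
  exists p k : nat, prime p /\ (0 < k)%N /\ q = (p ^ k)%N.

Section G.
Variables (F : finFieldType) (H : {group {unit F}}).

Definition Hset : {set F} := [set val u | u in H].

Definition cls (p : F * F) : {set F * F} :=
  [set (val h * p.1, val h * p.2) | h in H].

Definition Gverts : {set {set F * F}} :=
  [set cls p | p in [set p : F * F | p != (0, 0)]].

(* adjacency: distinct classes, a x + b y in H (independent of representatives) *)
Definition Gadj (u v : {set F * F}) : bool :=
  (u != v) &&
  [exists p in u, exists r in v, p.1 * r.1 + p.2 * r.2 \in Hset].
End G.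

Definition Kfree (T : finType) (V : {set T}) (e : rel T) (s m : nat) : Prop :=
  ~ exists A B : {set T},
      [/\ (A \subset V) && (B \subset V), #|A| = s, #|B| = m,
          [disjoint A & B] &
          forall a b, a \in A -> b \in B -> e a b].

From mathcomp Require Import all_boot all_algebra all_fingroup cyclic finfield.
From mathcomp Require Import ring.
Set Implicit Arguments. Unset Strict Implicit. Unset Printing Implicit Defensive.
Import GRing.Theory.
Local Open Scope ring_scope.

(* Let <v1>, <v2>, <v3> be three distinct vertices with a common neighbour.
   Any two of v1, v2, v3 are then linearly independent, so v3 = al v1 + be v2
   with al, be <> 0.  A common neighbour <x> is determined by the slope
   s = (v2.x)/(v1.x), which lies in H together with al + be s = (v3.x)/(v1.x).
   Every h in H has a norm h^(q+1) that is a t-th root of unity, and since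
   x |-> x^q is additive, prescribing the norms of s and of al + be s leaves a
   quadratic equation for s.  Hence there are at most 2 t^2 common
   neighbours. *)

Lemma pchar_nat_sqrt_card (F : finFieldType) (q : nat) :
  prime_power q -> #|F| = (q ^ 2)%N -> [pchar F].-nat q.
Proof.
move=> [p [k [p_pr [_ ->]]]] cardF.
have pF : p \in [pchar F].
  by apply: (card_finPcharP (n := (k * 2)%N)); rewrite // cardF expnM.
by rewrite (eq_pnat _ (pcharf_eq pF)) pnatX pnat_id.
Qed.

Section NormFibers.
Variables (F : finFieldType) (n : nat).
Hypothesis n_pchar : [pchar F].-nat n.

Lemma card_norm_fiber_le2 (a b r r' : F) : a != 0 -> b != 0 ->
  (#|[set s : F | (s ^+ n.+1 == r) && ((a + b * s) ^+ n.+1 == r')]| <= 2)%N.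
Proof.
move=> a0 b0.
(* (a + b s)^(n+1) = (a^n + b^n s^n)(a + b s); multiplying by s and
   substituting s^(n+1) = r leaves a quadratic equation in s. *)
pose P : {poly F} :=
  Poly [:: a * b ^+ n * r; a ^+ n.+1 + b ^+ n.+1 * r - r'; b * a ^+ n].
have sizeP : size P = 3%N by rewrite (PolyK (c := 0)) //= mulf_neq0 ?expf_neq0.
rewrite cardE -ltnS -sizeP; apply: max_poly_roots; last exact: enum_uniq.
  by rewrite -size_poly_eq0 sizeP.
apply/allP => s; rewrite mem_enum inE => /andP[/eqP rE /eqP r'E].
rewrite /root horner_Poly /= -r'E -rE !exprS (exprDn_pchar _ _ n_pchar) exprMn.
by apply/eqP; ring.
Qed.

Lemma card_affine_preim_le (t : nat) (S : {set F}) (a b : F) :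
  (0 < t)%N -> {in S, forall s, (s ^+ n.+1) ^+ t = 1} -> a != 0 -> b != 0 ->
  (#|[set s in S | (a + b * s)%R \in S]| <= 2 * t ^ 2)%N.
Proof.
move=> t_gt0 S_norm a0 b0.
pose T := [set r : F | r ^+ t == 1].
have cardT : (#|T| <= t)%N.
  rewrite cardE; apply: max_unity_roots => //; last exact: enum_uniq.
  by apply/allP => r; rewrite mem_enum inE unity_rootE.
pose norms s := (s ^+ n.+1, (a + b * s) ^+ n.+1).
rewrite -sum1_card (partition_big norms (mem (setX T T))) => [|s]; last first.
  by rewrite inE => /andP[/S_norm sT /S_norm abT]; rewrite !inE sT abT !eqxx.
apply: (@leq_trans (\sum_(j in setX T T) 2)%N).
  apply: leq_sum => -[r r'] _; rewrite sum1dep_card.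
  apply: leq_trans (card_norm_fiber_le2 r r' a0 b0).
  apply/subset_leq_card/subsetP => s; rewrite !inE => /andP[_ /eqP[-> ->]].
  by rewrite !eqxx.
by rewrite sum_nat_const cardsX mulnC leq_mul2l /= expnS expn1 leq_mul.
Qed.

End NormFibers.

Section PairAlgebra.
Variable F : fieldType.

Definition scalep (h : F) (p : F * F) : F * F := (h * p.1, h * p.2).
Definition dotp (x y : F * F) : F := x.1 * y.1 + x.2 * y.2.
Definition detp (x y : F * F) : F := x.1 * y.2 - x.2 * y.1.

Lemma dotp_scalepl h v x : dotp (scalep h v) x = h * dotp v x.
Proof. by rewrite /dotp /=; ring. Qed.

Lemma dotp_scalepr h v x : dotp v (scalep h x) = h * dotp v x.
Proof. by rewrite /dotp /=; ring. Qed.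

Lemma detp_cramer v1 v2 v3 x :
  detp v1 v2 * dotp v3 x = detp v3 v2 * dotp v1 x + detp v1 v3 * dotp v2 x.
Proof. by rewrite /detp /dotp; ring. Qed.

Lemma detp_eq0_scalep v w :
  v != (0, 0) -> detp v w = 0 -> exists c, w = scalep c v.
Proof.
case: v w => [v1 v2] [w1 w2]; rewrite /detp /scalep /= => v0 /eqP.
rewrite subr_eq0 => /eqP vw.
have [v1_0|v1_0] := eqVneq v1 0.
  have v2_0 : v2 != 0 by move: v0; rewrite v1_0 xpair_eqE eqxx.
  move: vw; rewrite v1_0 mul0r => /esym/eqP; rewrite mulf_eq0 (negbTE v2_0).
  by move=> /eqP ->; exists (w2 / v2); rewrite mulr0 divfK.
exists (w1 / v1); rewrite divfK //; congr (_, _).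
by apply: (mulfI v1_0); rewrite vw; field.
Qed.

Lemma dotp_inj v1 v2 y z : detp v1 v2 != 0 ->
  dotp v1 y = dotp v1 z -> dotp v2 y = dotp v2 z -> y = z.
Proof.
move=> d12 e1 e2.
have E1 u : detp v1 v2 * u.1 = v2.2 * dotp v1 u - v1.2 * dotp v2 u.
  by rewrite /detp /dotp; ring.
have E2 u : detp v1 v2 * u.2 = v1.1 * dotp v2 u - v2.1 * dotp v1 u.
  by rewrite /detp /dotp; ring.
case: y z e1 e2 E1 E2 => y1 y2 [z1 z2] e1 e2 E1 E2.
by congr (_, _); apply: (mulfI d12);
  rewrite ?(E1 (y1, y2)) ?(E1 (z1, z2)) ?(E2 (y1, y2)) ?(E2 (z1, z2)) e1 e2.
Qed.

Definition slope (v1 v2 x : F * F) : F := dotp v2 x / dotp v1 x.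

Lemma slope_affine v1 v2 v3 x : detp v1 v2 != 0 -> dotp v1 x != 0 ->
  detp v3 v2 / detp v1 v2 + detp v1 v3 / detp v1 v2 * slope v1 v2 x
  = dotp v3 x / dotp v1 x.
Proof.
move=> d12 x0; apply: (mulfI d12); rewrite [RHS]mulrA detp_cramer /slope.
by field; apply/andP.
Qed.

End PairAlgebra.

Section Graph.
Variables (F : finFieldType) (H : {group {unit F}}).

Lemma HsetP x : reflect (exists2 u, u \in H & x = val u) (x \in Hset H).
Proof. exact: imsetP. Qed.

Lemma Hset1 : 1 \in Hset H.
Proof. by apply/HsetP; exists 1%g; rewrite ?group1. Qed.

Lemma HsetM x y : x \in Hset H -> y \in Hset H -> x * y \in Hset H.
Proof.
move=> /HsetP[u uH ->] /HsetP[w wH ->]; apply/HsetP; exists (u * w)%g.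
  exact: groupM.
by rewrite FinRing.val_unitM.
Qed.

Lemma HsetV x : x \in Hset H -> x^-1 \in Hset H.
Proof.
by move=> /HsetP[u uH ->]; apply/HsetP; exists (u^-1)%g; rewrite ?groupV.
Qed.

Lemma Hset_div x y : x \in Hset H -> y \in Hset H -> x / y \in Hset H.
Proof. by move=> xH /HsetV; apply: HsetM. Qed.

Lemma Hset_neq0 x : x \in Hset H -> x != 0.
Proof. by move=> /HsetP[u _ ->]; rewrite -unitfE; apply: valP. Qed.

Lemma HsetMl x y : x \in Hset H -> (x * y \in Hset H) = (y \in Hset H).
Proof.
move=> xH; apply/idP/idP => [xyH|]; last exact: HsetM.
by rewrite -(mulKf (Hset_neq0 xH) y) HsetM ?HsetV.
Qed.

Lemma Hset_expg_card x : x \in Hset H -> x ^+ #|H| = 1.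
Proof. by move=> /HsetP[u uH ->]; rewrite -FinRing.val_unitX expg_cardG. Qed.

Lemma mem_clsP r p :
  reflect (exists2 h, h \in Hset H & r = scalep h p) (r \in cls H p).
Proof.
apply: (iffP imsetP) => [[u uH ->]|[h /HsetP[u uH ->] ->]]; last by exists u.
by exists (val u) => //; apply/HsetP; exists u.
Qed.

Lemma cls_id p : p \in cls H p.
Proof.
by apply/mem_clsP; exists 1; rewrite ?Hset1 // /scalep !mul1r; case: p.
Qed.

Lemma cls_scalep h p : h \in Hset H -> cls H (scalep h p) = cls H p.
Proof.
move=> hH; apply/setP => r; apply/mem_clsP/mem_clsP => -[k kH ->].
  by exists (k * h); rewrite ?HsetM // /scalep /= !mulrA.
by exists (k / h); rewrite ?Hset_div // /scalep /= !mulrA divfK ?Hset_neq0.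
Qed.

Lemma cls_eq r p : r \in cls H p -> cls H r = cls H p.
Proof. by move=> /mem_clsP[h hH ->]; rewrite cls_scalep. Qed.

Lemma GvertsP u :
  reflect (exists2 v : F * F, v != (0, 0) & u = cls H v) (u \in Gverts H).
Proof.
by apply: (iffP imsetP) => -[v v0 ->]; exists v; rewrite // inE in v0 *.
Qed.

Definition rep (u : {set F * F}) : F * F := odflt (0, 0) [pick p in u].

Lemma cls_rep u : u \in Gverts H -> cls H (rep u) = u.
Proof.
case/GvertsP => v _ ->; rewrite /rep.
by case: pickP => [p /cls_eq //|/(_ v)]; rewrite /= cls_id.
Qed.

Lemma Gadj_dotp v x : Gadj H (cls H v) (cls H x) -> dotp v x \in Hset H.
Proof.
case/andP => _ /existsP[_ /andP[/mem_clsP[h hH ->]]].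
case/existsP => _ /andP[/mem_clsP[k kH ->]].
by rewrite -/(dotp _ _) dotp_scalepl dotp_scalepr !HsetMl.
Qed.

Lemma Gadj_dotp_rep v u :
  u \in Gverts H -> Gadj H (cls H v) u -> dotp v (rep u) \in Hset H.
Proof. by move=> uV; rewrite -{1}(cls_rep uV); apply: Gadj_dotp. Qed.

Lemma common_nbr_detp_neq0 v w x : v != (0, 0) -> cls H v != cls H w ->
  dotp v x \in Hset H -> dotp w x \in Hset H -> detp v w != 0.
Proof.
move=> v0 vw vxH wxH; apply: contra_neq vw => /(detp_eq0_scalep v0)[c wE].
have cH : c \in Hset H by move: wxH; rewrite wE dotp_scalepl mulrC HsetMl.
by rewrite wE cls_scalep.
Qed.

Lemma slope_inj_cls v1 v2 x y : detp v1 v2 != 0 ->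
  dotp v1 x \in Hset H -> dotp v1 y \in Hset H ->
  slope v1 v2 x = slope v1 v2 y -> cls H x = cls H y.
Proof.
move=> d12 xH yH exy; pose la := dotp v1 y / dotp v1 x.
have la_x : scalep la x = y.
  apply: (dotp_inj d12); rewrite dotp_scalepr.
    by rewrite divfK ?Hset_neq0.
  rewrite -[dotp v2 y](divfK (Hset_neq0 yH)) -/(slope _ _ _) -exy /slope /la.
  by field; rewrite !Hset_neq0.
by rewrite -la_x cls_scalep ?Hset_div.
Qed.

Lemma card_common_nbrs_affine (B : {set {set F * F}}) (v1 v2 v3 : F * F) :
  detp v1 v2 != 0 -> B \subset Gverts H ->
  {in B, forall u, [/\ dotp v1 (rep u) \in Hset H, dotp v2 (rep u) \in Hset H
                      & dotp v3 (rep u) \in Hset H]} ->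
  (#|B| <= #|[set s in Hset H |
     (detp v3 v2 / detp v1 v2 + detp v1 v3 / detp v1 v2 * s)%R \in Hset H]|)%N.
Proof.
move=> d12 sBV dotH; pose f u := slope v1 v2 (rep u).
have f_inj : {in B &, injective f}.
  move=> u w uB wB /(slope_inj_cls d12) eq_cls.
  rewrite -(cls_rep (subsetP sBV _ uB)) -(cls_rep (subsetP sBV _ wB)).
  by apply: eq_cls; [case: (dotH u uB) | case: (dotH w wB)].
rewrite -(card_in_imset f_inj).
apply/subset_leq_card/subsetP => _ /imsetP[u uB ->].
have [h1 h2 h3] := dotH u uB.
rewrite inE slope_affine ?(Hset_neq0 h1) //.
by apply/andP; split; apply: Hset_div.
Qed.

Lemma card_common_nbrs_le (q t : nat) (B : {set {set F * F}})
    (v1 v2 v3 : F * F) :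
  [pchar F].-nat q -> (0 < t)%N -> #|H| = (t * (q + 1))%N ->
  v1 != (0, 0) -> v3 != (0, 0) ->
  cls H v1 != cls H v2 -> cls H v2 != cls H v3 -> cls H v3 != cls H v1 ->
  B \subset Gverts H -> {in B, forall u, Gadj H (cls H v1) u} ->
  {in B, forall u, Gadj H (cls H v2) u} ->
  {in B, forall u, Gadj H (cls H v3) u} ->
  (#|B| <= 2 * t ^ 2)%N.
Proof.
move=> q_pchar t_gt0 cardH v1_0 v3_0 n12 n23 n31 sBV adj1 adj2 adj3.
have dotB : {in B, forall u, [/\ dotp v1 (rep u) \in Hset H,
    dotp v2 (rep u) \in Hset H & dotp v3 (rep u) \in Hset H]}.
  move=> u uB; have uV := subsetP sBV u uB.
  by split; apply: Gadj_dotp_rep uV _;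
    [exact: adj1 | exact: adj2 | exact: adj3].
have [->|[u0 /dotB[h1 h2 h3]]] := set_0Vmem B; first by rewrite cards0.
have d12 : detp v1 v2 != 0 by apply: common_nbr_detp_neq0 h1 h2.
have d32 : detp v3 v2 != 0.
  by apply: common_nbr_detp_neq0 h3 h2; rewrite // eq_sym.
have d13 : detp v1 v3 != 0.
  by apply: common_nbr_detp_neq0 h1 h3; rewrite // eq_sym.
have Hset_norm : {in Hset H, forall s, (s ^+ q.+1) ^+ t = 1}.
  by move=> s sH; rewrite -exprM mulnC -addn1 -cardH Hset_expg_card.
apply: leq_trans (card_affine_preim_le q_pchar t_gt0 Hset_norm _ _).
- exact: card_common_nbrs_affine d12 sBV dotB.
- by apply: mulf_neq0; rewrite ?invr_eq0.
- by apply: mulf_neq0; rewrite ?invr_eq0.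
Qed.
End Graph.

Theorem theorem5 (q t : nat) (F : finFieldType) (H : {group {unit F}}) :
  prime_power q -> (0 < t)%N -> (t %| q - 1)%N ->
  #|F| = (q ^ 2)%N -> #|H| = (t * (q + 1))%N ->
  Kfree (Gverts H) (@Gadj F H) 3 (2 * t ^ 2 + 1).
Proof.
move=> q_pp t_gt0 _ cardF cardH [A [B [/andP[sAV sBV] cardA cardB _ adj]]].
have /card_gt2P[a1 [a2 [a3 [[a1A a2A a3A] [n12 n23 n31]]]]] : (2 < #|A|)%N.
  by rewrite cardA.
have /GvertsP[v1 v1_0 a1E] := subsetP sAV _ a1A.
have /GvertsP[v2 _ a2E] := subsetP sAV _ a2A.
have /GvertsP[v3 v3_0 a3E] := subsetP sAV _ a3A.
subst a1 a2 a3.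
have := card_common_nbrs_le (pchar_nat_sqrt_card q_pp cardF) t_gt0 cardH
  v1_0 v3_0 n12 n23 n31 sBV
  (fun u => adj _ u a1A) (fun u => adj _ u a2A) (fun u => adj _ u a3A).
by rewrite cardB addn1 ltnn.
Qed.
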